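(* Let $m\ge1$ be an integer, let $\mathcal{T}$ be the $m\times m$ lower bidiagonal matrix with $1$ on the diagonal and $-1$ on the sub-diagonal, and let $\gamma\in[0,2]$ with $\gamma\ne1$. Put $A_\gamma=(1-\gamma)\mathcal{T}+\gamma I_m$. Then every eigenvalue $\sigma$ of $A_\gamma A_\gamma^\dagger$ can be written as $$\sigma=(1-\gamma)^2+2(1-\gamma)\cos\theta+1=\left(\frac{\sin\theta}{\sin m\theta}\right)^2$$ for some real $\theta\not\equiv0\pmod\pi$ satisfying $(1-\gamma)\sin m\theta+\sin(m+1)\theta=0$. *)

From HB Require Import structures.
From mathcomp Require Import all_boot all_order all_algebra.
From mathcomp Require Import all_classical all_reals all_analysis.
Set Implicit Arguments. Unset Strict Implicit. Unset Printing Implicit Defensive.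
Import Order.TTheory GRing.Theory Num.Theory.
Local Open Scope ring_scope.

Definition bidiagT (R : ringType) (m : nat) : 'M[R]_m :=
  \matrix_(i < m, j < m)
    (if i == j then 1 else if (i : nat) == (j : nat).+1 then -1 else 0).

Definition Agamma (R : ringType) (m : nat) (g : R) : 'M[R]_m :=
  (1 - g) *: bidiagT R m + g%:M.

From HB Require Import structures.
From mathcomp Require Import all_boot all_order all_algebra.
From mathcomp Require Import all_classical all_reals all_analysis.
From mathcomp Require Import ring lra.
Import Order.TTheory GRing.Theory Num.Theory.
Set Implicit Arguments. Unset Strict Implicit. Unset Printing Implicit Defensive.
Local Open Scope ring_scope.

(* Write c = 1 - g (so c != 0 and |c| <= 1) and sigma = c^2 + 2 c x + 1.  If v is
   a left eigenvector of A A^T for sigma, then A acts on coordinates as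
   (v A)_j = v_j - c v_(j+1) and (w A^T)_j = w_j - c w_(j-1); after dividing
   by c, the eigen-equation says that u_n = (-1)^n v_n / v_0 solves the
   Chebyshev recurrence u_(n+2) = 2 x u_(n+1) - u_n with u_0 = 1,
   u_1 = 2 x + c, and that u_m = 0.  Such a solution is >= 1 in absolute value
   when |x| >= 1, so |x| < 1 and x = cos t with sin t != 0.  Then
   sin t * u_n = sin ((n+1) t) + c sin (n t), and u_m = 0 is the secular
   equation c sin (m t) + sin ((m+1) t) = 0; together with the identity
   sin^2 a + sin^2 (a+t) - 2 cos t sin a sin (a+t) = sin^2 t it gives
   sigma = (sin t / sin (m t))^2. *)

Section ChebyshevRecurrence.
Variable R : comPzRingType.

Definition cheb_rec (x : R) (N : nat) (u : nat -> R) : Prop :=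
  forall n, (n.+2 <= N)%N -> u n.+2 = 2 * x * u n.+1 - u n.

Fixpoint cheb_pair (x a b : R) (n : nat) : R * R :=
  if n is n'.+1 then let p := cheb_pair x a b n' in (p.2, 2 * x * p.2 - p.1)
  else (a, b).

Definition cheb (x a b : R) (n : nat) : R := (cheb_pair x a b n).1.

Lemma cheb0 x a b : cheb x a b 0 = a. Proof. by []. Qed.
Lemma cheb1 x a b : cheb x a b 1 = b. Proof. by []. Qed.
Lemma chebSS x a b n : cheb x a b n.+2 = 2 * x * cheb x a b n.+1 - cheb x a b n.
Proof. by rewrite /cheb /=; case: (cheb_pair x a b n). Qed.

Lemma cheb_rec_eq x N u w : cheb_rec x N u -> cheb_rec x N w ->
  u 0%N = w 0%N -> u 1%N = w 1%N -> forall n, (n <= N)%N -> u n = w n.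
Proof.
move=> ru rw u0 u1 n; elim/ltn_ind: n => -[|[|n]] IH // hn.
by rewrite ru // rw // !IH // ?(ltnW hn) ?(ltnW (ltnW hn)).
Qed.

Lemma cheb_sign x a b n : (-1) ^+ n * cheb x a b n = cheb (- x) a (- b) n.
Proof.
apply: (@cheb_rec_eq (- x) n (fun k => (-1) ^+ k * cheb x a b k)) => [k _|k _|||//].
- by rewrite chebSS !exprS; ring.
- by rewrite chebSS.
- by rewrite expr0 mul1r.
- by rewrite expr1 mulN1r.
Qed.

End ChebyshevRecurrence.

Section ChebyshevGrowth.
Variable R : realDomainType.

(* For x >= 1 and initial values 1 <= a <= b the solution is nondecreasing,
   hence never smaller than 1. *)
Lemma cheb_ge1 (x a b : R) : 1 <= x -> 1 <= a -> a <= b ->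
  forall n, 1 <= cheb x a b n.
Proof.
move=> x1 a1 ab.
have step n : 1 <= cheb x a b n <= cheb x a b n.+1.
  elim: n => [|n /andP[h1 h2]]; first by rewrite cheb0 cheb1 a1 ab.
  rewrite chebSS; apply/andP; split; nra.
by move=> n; have /andP[] := step n.
Qed.

Lemma cheb_root_lt1 (c x : R) n : -1 <= c <= 1 ->
  cheb x 1 (2 * x + c) n = 0 -> -1 < x < 1.
Proof.
move=> /andP[c_ge c_le] root.
have [x_ge1|x_lt1] := lerP 1 x.
  have b_ge1 : 1 <= 2 * x + c by lra.
  by have := cheb_ge1 x_ge1 (lexx 1) b_ge1 n; rewrite root; lra.
have [x_ge|x_le] := ltrP (-1) x; first by apply/andP.
have := cheb_sign x 1 (2 * x + c) n; rewrite root mulr0 => /esym root'.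
have [mx_ge1 b_ge1] : 1 <= - x /\ 1 <= - (2 * x + c) by split; lra.
by have := cheb_ge1 mx_ge1 (lexx 1) b_ge1 n; rewrite root'; lra.
Qed.

End ChebyshevGrowth.

Section ChebyshevTrigonometry.
Variable R : realType.

Lemma sinSS (t : R) n :
  sin (n.+2%:R * t) = 2 * cos t * sin (n.+1%:R * t) - sin (n%:R * t).
Proof.
have -> : n.+2%:R * t = n.+1%:R * t + t by rewrite -natr1 mulrDl mul1r.
have -> : n%:R * t = n.+1%:R * t - t by rewrite -natr1 mulrDl mul1r addrK.
by rewrite sinD sinB; ring.
Qed.

Lemma cheb_sin (c t : R) n :
  sin t * cheb (cos t) 1 (2 * cos t + c) n = sin (n.+1%:R * t) + c * sin (n%:R * t).
Proof.
apply: (@cheb_rec_eq _ (cos t) n (fun k => sin t * cheb (cos t) 1 (2 * cos t + c) k)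
  (fun k => sin (k.+1%:R * t) + c * sin (k%:R * t))) => // [k _|k _||].
- by rewrite chebSS; ring.
- by rewrite !sinSS; ring.
- by rewrite cheb0 mulr1 mul0r sin0 mulr0 addr0 mul1r.
- by rewrite cheb1 (sinSS t 0) mul0r sin0 subr0 mul1r; ring.
Qed.

Lemma sin_sq_shift (a t : R) :
  sin a ^+ 2 + sin (a + t) ^+ 2 - 2 * cos t * sin a * sin (a + t) = sin t ^+ 2.
Proof.
rewrite sinD.
have cos_sq := cos2Dsin2 t; have cosa_sq := cos2Dsin2 a.
transitivity (sin a ^+ 2 * (1 - cos t ^+ 2) + cos a ^+ 2 * sin t ^+ 2); first ring.
have -> : 1 - cos t ^+ 2 = sin t ^+ 2 by rewrite -cos_sq; ring.
have -> : cos a ^+ 2 = 1 - sin a ^+ 2 by rewrite -cosa_sq; ring.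
ring.
Qed.

End ChebyshevTrigonometry.

Section AgammaProducts.
Variables (F : fieldType) (m : nat) (g : F).
Local Notation c := (1 - g).
Local Notation A := (Agamma m g).

(* The n-th coordinate of a row vector, extended by 0 beyond its length. *)
Definition coord (u : 'rV[F]_m) (n : nat) : F := oapp (u 0) 0 (insub n).

Lemma coord_ord (u : 'rV[F]_m) (i : 'I_m) : coord u i = u 0 i.
Proof. by rewrite /coord valK. Qed.

Lemma coord_out (u : 'rV[F]_m) n : (m <= n)%N -> coord u n = 0.
Proof. by move=> n_ge; rewrite /coord insubF // ltnNge n_ge. Qed.

Lemma coordZ a (u : 'rV[F]_m) n : coord (a *: u) n = a * coord u n.
Proof. by rewrite /coord; case: insub => [i|] /=; rewrite ?mxE ?mulr0. Qed.

Lemma Agamma_entry (i k : 'I_m) :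
  A i k = ((i : nat) == k)%:R - c * ((i : nat) == k.+1)%:R.
Proof.
rewrite /Agamma /bidiagT !mxE -val_eqE /=.
have [->|_] := eqVneq (i : nat) k; first by rewrite (ltn_eqF (ltnSn _)) /=; ring.
by case: eqP => _ /=; ring.
Qed.

Lemma sum_coord_indicator (u : 'rV[F]_m) n :
  \sum_(i < m) u 0 i * ((i : nat) == n)%:R = coord u n.
Proof.
under eq_bigr => i _ do rewrite mulr_natr mulrb -coord_ord.
rewrite -big_mkcond big_ord1_eq.
by case: ltnP => // n_ge; rewrite coord_out.
Qed.

Lemma coord_mul_Agamma (u : 'rV[F]_m) j :
  coord (u *m A) j = coord u j - c * coord u j.+1.
Proof.
have [j_lt|j_ge] := ltnP j m; last by rewrite !coord_out ?mulr0 ?subr0 // ltnW.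
rewrite -[j]/(Ordinal j_lt : nat) coord_ord mxE.
under eq_bigr => k _ do rewrite Agamma_entry mulrBr mulrCA.
by rewrite sumrB -mulr_sumr !sum_coord_indicator.
Qed.

Lemma coord_mul_Agamma_tr (u : 'rV[F]_m) j : (j < m)%N ->
  coord (u *m A^T) j = coord u j - c * (if j is j'.+1 then coord u j' else 0).
Proof.
move=> j_lt; rewrite -[j in LHS]/(Ordinal j_lt : nat) coord_ord mxE.
under eq_bigr => k _ do rewrite mxE Agamma_entry mulrBr mulrCA eq_sym.
rewrite sumrB -mulr_sumr sum_coord_indicator; congr (_ - c * _).
case: j j_lt => [|j] _ /=.
  by rewrite big1 // => k _; rewrite mulr0.
by under eq_bigr => k _ do rewrite eqSS eq_sym; rewrite sum_coord_indicator.
Qed.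

Lemma eigen_coord_cheb (v : 'rV[F]_m) (x : F) : c != 0 ->
  v *m (A *m A^T) = (c ^+ 2 + 2 * c * x + 1) *: v ->
  forall n, (n <= m)%N -> (-1) ^+ n * coord v n = coord v 0 * cheb x 1 (2 * x + c) n.
Proof.
move=> c_neq0 eig.
have eq_at j : (j < m)%N -> (c ^+ 2 + 2 * c * x + 1) * coord v j =
    coord (v *m A) j - c * (if j is j'.+1 then coord (v *m A) j' else 0).
  by move=> j_lt; rewrite -coordZ -eig mulmxA coord_mul_Agamma_tr.
have cancel_c (a : F) : c * a = 0 -> a = 0.
  by move/eqP; rewrite mulf_eq0 (negbTE c_neq0) => /eqP.
have [m0|m_gt0] := posnP m.
  by move=> n _; rewrite !coord_out ?m0 // mulr0 mul0r.
apply: (@cheb_rec_eq _ x m) => [n n2_le| n _ | | ].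
- have := eq_at n.+1 n2_le; rewrite !coord_mul_Agamma => h.
  have /cancel_c/eqP : c * (coord v n.+2 + 2 * x * coord v n.+1 + coord v n) = 0.
    by rewrite -[RHS](subrr ((c ^+ 2 + 2 * c * x + 1) * coord v n.+1)) {2}h; ring.
  by rewrite -addrA addr_eq0 => /eqP ->; rewrite !exprS; ring.
- by rewrite chebSS; ring.
- by rewrite expr0 mul1r cheb0 mulr1.
- have := eq_at 0%N m_gt0; rewrite coord_mul_Agamma mulr0 subr0 => h.
  have /cancel_c/eqP : c * (coord v 1 + (2 * x + c) * coord v 0) = 0.
    by rewrite -[RHS](subrr ((c ^+ 2 + 2 * c * x + 1) * coord v 0)) {2}h; ring.
  by rewrite addr_eq0 => /eqP ->; rewrite cheb1; ring.
Qed.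

Lemma eigen_cheb_root (v : 'rV[F]_m) (x : F) : c != 0 -> v != 0 ->
  v *m (A *m A^T) = (c ^+ 2 + 2 * c * x + 1) *: v -> cheb x 1 (2 * x + c) m = 0.
Proof.
move=> c_neq0 v_neq0 eig; have alt := eigen_coord_cheb c_neq0 eig.
have v0_neq0 : coord v 0 != 0.
  apply: contra v_neq0 => /eqP v0_eq0; apply/eqP/rowP => i; rewrite mxE -coord_ord.
  have := alt i (ltnW (ltn_ord i)); rewrite v0_eq0 mul0r => /eqP.
  by rewrite mulf_eq0 signr_eq0 => /eqP.
have := alt m (leqnn m); rewrite coord_out // mulr0 => /esym/eqP.
by rewrite mulf_eq0 (negbTE v0_neq0) => /eqP.
Qed.

End AgammaProducts.

Lemma cheb_root_angle (R : realType) (c x : R) (m : nat) : -1 <= c <= 1 ->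
  cheb x 1 (2 * x + c) m = 0 ->
  exists t : R, [/\ sin t != 0, cos t = x,
    c ^+ 2 + 2 * c * x + 1 = (sin t / sin (m%:R * t)) ^+ 2 &
    c * sin (m%:R * t) + sin (m.+1%:R * t) = 0].
Proof.
move=> c_bound root; have /andP[x_gt x_lt] := cheb_root_lt1 c_bound root.
have cos_t : cos (acos x) = x by apply: acosK; rewrite in_itv /=; apply/andP; split; lra.
move: (acos x) cos_t => t cos_t.
have sin_t : sin t ^+ 2 = 1 - x ^+ 2 by rewrite sin2cos2 cos_t.
have sin_t_neq0 : sin t != 0 by apply/eqP => st0; move: sin_t; rewrite st0 expr0n /=; nra.
have secular : c * sin (m%:R * t) + sin (m.+1%:R * t) = 0.
  by have := cheb_sin c t m; rewrite cos_t root mulr0 addrC => <-.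
have shift := sin_sq_shift (m%:R * t) t.
rewrite (_ : m%:R * t + t = m.+1%:R * t) in shift; last by rewrite -natr1 mulrDl mul1r.
have sm_neq0 : sin (m%:R * t) != 0.
  apply/eqP=> sm0; move: secular shift; rewrite sm0 mulr0 add0r => ->.
  by rewrite expr0n /= !mulr0 !addr0 subr0 => /esym/eqP; rewrite expf_eq0 (negbTE sin_t_neq0).
exists t; split => //.
rewrite expr_div_n -shift; apply: (mulIf (expf_neq0 2 sm_neq0)); rewrite divfK ?expf_neq0 //.
have -> : sin (m.+1%:R * t) = - (c * sin (m%:R * t)).
  by apply/eqP; rewrite -addr_eq0 addrC secular.
by rewrite cos_t; ring.
Qed.

Theorem mainTheorem9 (R : realType) (m : nat) (g : R) (sigma : R) :
  (1 <= m)%N -> 0 <= g -> g <= 2 -> g != 1 ->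
  eigenvalue (Agamma m g *m (Agamma m g)^T) sigma ->
  exists theta : R,
    sin theta != 0 /\
    sigma = (1 - g) ^+ 2 + 2 * (1 - g) * cos theta + 1 /\
    sigma = (sin theta / sin (m%:R * theta)) ^+ 2 /\
    (1 - g) * sin (m%:R * theta) + sin ((m.+1)%:R * theta) = 0.
Proof.
move=> _ g_ge0 g_le2 g_neq1 /eigenvalueP [v eig v_neq0].
have c_neq0 : 1 - g != 0 by rewrite subr_eq0 eq_sym.
have c_bound : -1 <= 1 - g <= 1 by apply/andP; split; lra.
pose x := (sigma - 1 - (1 - g) ^+ 2) / (2 * (1 - g)).
have sigmaE : sigma = (1 - g) ^+ 2 + 2 * (1 - g) * x + 1.
  by rewrite /x mulrC divfK ?mulf_neq0 //; ring.
rewrite sigmaE in eig.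
have [t [st_neq0 cos_t sigma_sin secular]] :=
  cheb_root_angle c_bound (eigen_cheb_root c_neq0 v_neq0 eig).
by exists t; rewrite sigmaE -sigma_sin cos_t.
Qed.
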